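(* Let $\mu$ be an offspring distribution, let $X,X_1,X_2,\dots$ be i.i.d. with $\mathbf P(X=i)=\mu_{i+1}$ for $i\ge-1$, and let $\Delta_n=\Delta(\mathrm T_n)$. For $N\ge0$ with $\mu(\{0,1,\dots,N\})>0$, let $X^{<N}_1,X^{<N}_2,\dots$ be i.i.d. with $\mathbf P(X^{<N}_1=i)=\mu_{i+1}/\mu(\{0,\dots,N\})$ for $i\in\{-1,0,\dots,N-1\}$ (i.e. distributed as $X$ conditioned on $X<N$). Then for every integer $n>N+1$ such that $\mathrm T_n$ is defined and the denominator below is positive, \[ \mathbf P(\Delta_n\le N)\le\frac{\mathbf P\big(X^{<N}_1+\dots+X^{<N}_n=-1\big)}{n\,\mathbf P(X_1=N)\,\mathbf P\big(X^{<N}_2+\dots+X^{<N}_n=-N-1\big)}. \]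
   Context: An offspring distribution is a probability measure $\mu=(\mu_k)_{k\ge0}$ on $\mathbb Z_+$. $\mathrm T_n$ is a $\mu$-Bienaymé (Galton–Watson) tree conditioned to have exactly $n$ vertices (defined when this event has positive probability), and $\Delta(\mathrm t)$ is the maximal number of children of a vertex of the tree $\mathrm t$. *)

From HB Require Import structures.
From mathcomp Require Import all_boot all_order all_algebra.
From mathcomp Require Import all_classical all_reals all_analysis.
Set Implicit Arguments. Unset Strict Implicit. Unset Printing Implicit Defensive.
Import Order.TTheory GRing.Theory Num.Theory.
Local Open Scope ring_scope.
Local Open Scope classical_set_scope.
Import numFieldNormedType.Exports.

Inductive tree := Node of seq tree.

Fixpoint tsize (t : tree) : nat :=
  let: Node ts := t in (sumn (map tsize ts)).+1.

Fixpoint maxdeg (t : tree) : nat :=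
  let: Node ts := t in foldr maxn (size ts) (map maxdeg ts).

(* Bienayme-Galton-Watson weight  P(T = t) = prod_{u in t} mu_{k_u(t)} *)
Fixpoint gw_weight {R : nzRingType} (mu : nat -> R) (t : tree) : R :=
  let: Node ts := t in
  mu (size ts) * foldr (fun x acc => x * acc) 1 (map (gw_weight mu) ts).

Fixpoint forests_fuel (fuel m : nat) : seq (seq tree) :=
  match fuel with
  | 0 => [::]
  | fuel'.+1 =>
    if m is 0 then [:: [::]] else
    flatten [seq [seq Node f :: g | f <- forests_fuel fuel' k,
                                    g <- forests_fuel fuel' (m - k.+1)]
            | k <- iota 0 m]
  end.

Definition forests (m : nat) : seq (seq tree) := forests_fuel m.+1 m.

Definition plane_trees (n : nat) : seq tree :=
  if n is n'.+1 then [seq Node f | f <- forests n'] else [::].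

Definition gw_size_mass {R : nzRingType} (mu : nat -> R) (n : nat) : R :=
  \sum_(t <- plane_trees n) gw_weight mu t.

(* P(Delta(T_n) <= N) for T_n the mu-GW tree conditioned to have n vertices *)
Definition prob_maxdeg_le {R : realType} (mu : nat -> R) (n N : nat) : R :=
  (\sum_(t <- plane_trees n | (maxdeg t <= N)%N) gw_weight mu t) / gw_size_mass mu n.

Definition offspring_distribution {R : realType} (mu : nat -> R) : Prop :=
  (forall k, 0 <= mu k) /\ ((fun n => \sum_(k < n) mu k) : nat -> R) @ \oo --> (1 : R).

(* Given a law p on Z_+ (p k = P(xi = k)), and X_i = xi_i - 1 i.i.d.,
   P(X_1 + ... + X_n = s) (s : int).  Since X_i >= -1, the event is
   { xi_1 + ... + xi_n = n + s }, a finite sum. *)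
Definition sum_mass {R : nzRingType} (p : nat -> R) (n m : nat) : R :=
  \sum_(k : {ffun 'I_n -> 'I_m.+1} | (\sum_(i < n) (k i : nat))%N == m)
     \prod_(i < n) p (k i : nat).

Definition walk_prob {R : nzRingType} (p : nat -> R) (n : nat) (s : int) : R :=
  if (0 <= n%:Z + s)%R then sum_mass p n (absz (n%:Z + s)) else 0.

(* law of X conditioned on X < N, shifted by +1: p k = P(X^{<N} = k - 1) *)
Definition trunc_law {R : realType} (mu : nat -> R) (N : nat) (k : nat) : R :=
  if (k <= N)%N then mu k / (\sum_(j < N.+1) mu j) else 0.

From Pilot Require Import Defs.
From HB Require Import structures.
From mathcomp Require Import all_boot all_order all_algebra.
From mathcomp Require Import all_classical all_reals all_analysis.
From mathcomp Require Import zify ring.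
Import Order.TTheory GRing.Theory Num.Theory.
Import numFieldNormedType.Exports.
Set Implicit Arguments. Unset Strict Implicit. Unset Printing Implicit Defensive.

(* Under the Łukasiewicz coding a plane tree with n vertices becomes a sequence
   of n child counts with sum n - 1 whose walk stays nonnegative, and by the
   cycle lemma exactly one of the n rotations of any sequence of length n and
   sum n - 1 is such a code.  Summing rotation-invariant product weights, the
   trees with maximal degree at most N thus carry 1/n of the weight of all
   sequences with entries at most N, which is q^n P(X^{<N}_1 + ... + X^{<N}_n = -1)
   with q = mu({0, ..., N}).  On the other hand at most one rotation of a sequence
   has as its only entry above N an entry N + 1 at its head, so
   P(|T| = n) >= mu_{N+1} q^(n-1) P(X^{<N}_2 + ... + X^{<N}_n = -N-1).
   Dividing, and using q <= 1, gives the bound. *)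

(** * Łukasiewicz codes of plane trees *)

Fixpoint tree_ind_Forall (P : tree -> Prop)
    (IH : forall ts, List.Forall P ts -> P (Node ts)) (t : tree) : P t :=
  let: Node ts := t in
  IH ts ((fix all_children ts : List.Forall P ts :=
            if ts is t :: ts'
            then List.Forall_cons _ (tree_ind_Forall IH t) (all_children ts')
            else List.Forall_nil _) ts).

Fixpoint gentree_of_tree (t : tree) : GenTree.tree unit :=
  let: Node ts := t in GenTree.Node 0 (map gentree_of_tree ts).

Fixpoint tree_of_gentree (g : GenTree.tree unit) : tree :=
  if g is GenTree.Node _ gs then Node (map tree_of_gentree gs) else Node [::].

Lemma gentree_of_treeK : cancel gentree_of_tree tree_of_gentree.
Proof.
elim/tree_ind_Forall => ts IH /=; congr Node.
by elim: IH => //= t ts' -> _ ->.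
Qed.

HB.instance Definition _ := Equality.copy tree (can_type gentree_of_treeK).

Lemma tree_ind_mem (P : tree -> Prop) :
  (forall ts, (forall t, t \in ts -> P t) -> P (Node ts)) -> forall t, P t.
Proof.
move=> IH; elim/tree_ind_Forall => ts IHts; apply: IH.
elim: IHts => // t ts' Pt _ IHts' u; rewrite inE => /orP[/eqP-> // | /IHts' //].
Qed.

Fixpoint lukasiewicz (t : tree) : seq nat :=
  let: Node ts := t in size ts :: flatten (map lukasiewicz ts).

Definition lukasiewicz_forest (f : seq tree) : seq nat := flatten (map lukasiewicz f).

(* [s] codes a forest of [w] trees: the walk [w, w - 1 + s_1, ...] stays
   positive before each step and ends at [0]. *)
Fixpoint is_forest_code (w : nat) (s : seq nat) : bool :=
  if s is x :: s' then (0 < w) && is_forest_code (w.-1 + x) s' else w == 0.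

Lemma size_lukasiewicz t : size (lukasiewicz t) = Defs.tsize t.
Proof.
elim/tree_ind_mem: t => ts IH /=; congr S; rewrite size_flatten /shape -map_comp.
by congr sumn; apply/eq_in_map => u /IH.
Qed.

Lemma forest_code_tree_cat t w r :
  is_forest_code w.+1 (lukasiewicz t ++ r) = is_forest_code w r.
Proof.
elim/tree_ind_mem: t w r => ts IH w r /=; rewrite addnC.
elim: ts IH w r => [|t ts IHts] IH w r //=.
rewrite -catA addSn IH ?mem_head // IHts // => u ut.
by apply: IH; rewrite inE ut orbT.
Qed.

Lemma forest_code_sumn w s : is_forest_code w s -> sumn s + w = size s.
Proof.
elim: s w => [|x s IH] w /=; first by move/eqP->.
by case/andP => w_gt0 /IH <-; lia.
Qed.

Lemma forest_codeP w s :
  is_forest_code w s -> exists2 f, size f = w & lukasiewicz_forest f = s.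
Proof.
elim: s w => [|x s IH] w /=; first by move/eqP->; exists [::].
case/andP => w_gt0 /IH [f size_f <-].
exists (Node (take x f) :: drop x f); first by rewrite /= size_drop size_f; lia.
rewrite /lukasiewicz_forest /= size_takel ?size_f ?leq_addl //.
by rewrite -flatten_cat -map_cat cat_take_drop.
Qed.

Lemma lukasiewicz_cat_inj t t' r r' :
  lukasiewicz t ++ r = lukasiewicz t' ++ r' -> t = t' /\ r = r'.
Proof.
elim/tree_ind_mem: t t' r r' => ts IH [ts'] r r' /= [eq_size eq_rest].
suff [-> ->] : ts = ts' /\ r = r' by [].
elim: ts ts' eq_size IH r r' eq_rest => [|t ts IHts] [|t' ts'] //= [eq_size] IH r r'.
rewrite -!catA => /(IH t (mem_head _ _)) [-> eq_rest].
have [|-> ->] // := IHts ts' eq_size _ _ _ eq_rest.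
by move=> u ut; apply: IH; rewrite inE ut orbT.
Qed.

Lemma lukasiewicz_inj : injective lukasiewicz.
Proof.
by move=> t t' eq_tt'; case: (@lukasiewicz_cat_inj t t' [::] [::]); rewrite ?eq_tt'.
Qed.

Lemma maxdeg_leq_lukasiewicz N t : (maxdeg t <= N) = all (leq^~ N) (lukasiewicz t).
Proof.
elim/tree_ind_mem: t => ts IH /=; move: (size ts) => a.
elim: ts IH => [|t ts IHts] IH /=; first by rewrite andbT.
rewrite geq_max all_cat IH ?mem_head // IHts; first by rewrite andbCA.
by move=> u ut; apply: IH; rewrite inE ut orbT.
Qed.

(** * Enumeration of plane trees *)

Definition forest_size (f : seq tree) : nat := sumn (map Defs.tsize f).

Lemma forest_size_cons t f : forest_size (t :: f) = Defs.tsize t + forest_size f.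
Proof. by []. Qed.

Lemma forests_fuelS fuel m : forests_fuel fuel.+1 m.+1 =
  flatten [seq [seq Node f :: g | f <- forests_fuel fuel k,
                                  g <- forests_fuel fuel (m.+1 - k.+1)]
          | k <- iota 0 m.+1].
Proof. by []. Qed.

Lemma forest_size_forests_fuel fuel m f : f \in forests_fuel fuel m -> forest_size f = m.
Proof.
elim: fuel m f => [|fuel IH] [|m] f //; first by rewrite inE => /eqP->.
rewrite forests_fuelS => /flatten_mapP[k]; rewrite mem_iota add0n => k_le_m.
case/allpairsP => -[g h] [/= /IH size_g /IH size_h ->].
by rewrite forest_size_cons /= -/(forest_size g) size_g size_h; lia.
Qed.

Lemma mem_forests_fuel fuel f :
  forest_size f < fuel -> f \in forests_fuel fuel (forest_size f).
Proof.
elim: fuel f => [|fuel IH] [|[g] h] // size_lt.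
have size_gh : forest_size (Node g :: h) = (forest_size g + forest_size h).+1 by [].
move: size_lt; rewrite size_gh forests_fuelS => size_lt.
apply/flatten_mapP; exists (forest_size g); first by rewrite mem_iota; lia.
apply/allpairsP; exists (g, h); split => //=; first by apply: IH; lia.
have -> : (forest_size g + forest_size h).+1 - (forest_size g).+1 = forest_size h by lia.
by apply: IH; lia.
Qed.

Lemma uniq_forests_fuel fuel m : uniq (forests_fuel fuel m).
Proof.
elim: fuel m => [|fuel IH] [|m] //; rewrite forests_fuelS.
have flatten_allpairs (F : nat -> seq (seq tree)) s :
    flatten (map F s) = [seq x | k <- s, x <- F k].
  by elim: s => //= k s ->; rewrite map_id.
rewrite flatten_allpairs; apply: allpairs_uniq_dep; first exact: iota_uniq.
  by move=> k _; apply: allpairs_uniq => // -[g h] [g' h'] _ _ [-> ->].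
move=> [k x] [k' x'] /allpairsPdep[k1 [x1 [_ x_k [-> ->]]]].
move=> /allpairsPdep[k2 [x2 [_ x_k' [-> ->]]]] /= eq_x; subst x2.
case/allpairsP: x_k => -[g h] [/= /forest_size_forests_fuel size_g _ eq_x1].
case/allpairsP: x_k' => -[g' h'] [/= /forest_size_forests_fuel size_g' _ eq_x2].
by move: eq_x1; rewrite eq_x2 => -[eq_g _]; rewrite -size_g -size_g' eq_g.
Qed.

Lemma mem_plane_trees n t : (t \in plane_trees n) = (Defs.tsize t == n).
Proof.
case: n => [|n] /=; first by case: t.
apply/mapP/eqP => [[f /forest_size_forests_fuel size_f ->] /= | ].
  by rewrite -/(forest_size f) size_f.
case: t => f /= [size_f]; exists f => //; rewrite -size_f.
by apply: mem_forests_fuel; rewrite /forest_size; lia.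
Qed.

Lemma uniq_plane_trees n : uniq (plane_trees n).
Proof. by case: n => //= n; rewrite map_inj_uniq ?uniq_forests_fuel // => f g []. Qed.

(** * The cycle lemma *)

Local Open Scope ring_scope.

Definition excess (s : seq nat) : int := (sumn s)%:Z - (size s)%:Z.

Lemma excess_cat s1 s2 : excess (s1 ++ s2) = excess s1 + excess s2.
Proof. by rewrite /excess sumn_cat size_cat !PoszD; lia. Qed.

Lemma excess_cons x s : excess (x :: s) = x%:Z - 1 + excess s.
Proof. by rewrite /excess /= !PoszD; lia. Qed.

Lemma excess_rot i s : excess (rot i s) = excess s.
Proof. by rewrite /excess size_rot sumn_rot. Qed.

Lemma forest_codeE w s : is_forest_code w s =
  (w%:Z + excess s == 0) && all (fun k => 0 < w%:Z + excess (take k s)) (iota 0 (size s)).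
Proof.
elim: s w => [|x s IH] w /=; first by rewrite /excess /= andbT; lia.
rewrite IH -add1n iotaDl all_map /= addr0 ltz_nat.
case: w => [|w] /=; first by rewrite andbF.
rewrite excess_cons; congr (_ && _); first by apply/eqP/eqP; rewrite PoszD; lia.
apply: eq_all => k /=; rewrite excess_cons.
suff -> : w.+1%:Z + (x%:Z - 1 + excess (take k s)) = (w + x)%N%:Z + excess (take k s) by [].
by rewrite PoszD; lia.
Qed.

Lemma excess_take_rot s i k : (i <= size s)%N -> (k <= size s)%N ->
  excess (take k (rot i s)) =
    if (k < size s - i)%N then excess (take (i + k) s) - excess (take i s)
    else excess s - excess (take i s) + excess (take (k - (size s - i)) s).
Proof.
move=> i_le k_le; rewrite /rot take_cat size_drop.
case: ifP => k_lt; first by rewrite takeD excess_cat; lia.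
rewrite excess_cat take_takel; last lia.
have := congr1 excess (cat_take_drop i s); rewrite excess_cat; lia.
Qed.

Lemma forest_code_rotP s i : excess s = -1 ->
  reflect (forall k, (k < size s)%N -> 0 <= excess (take k (rot i s)))
          (is_forest_code 1 (rot i s)).
Proof.
move=> exc_s; rewrite forest_codeE excess_rot exc_s size_rot /=.
apply: (iffP allP) => [pos k k_lt | nneg k].
  by have := pos k; rewrite mem_iota /= => /(_ k_lt); lia.
by rewrite mem_iota /= => /nneg; lia.
Qed.

(* A sequence of excess [-1] has exactly one rotation coding a tree: the
   rotation at the first minimum of its walk. *)
Lemma forest_code_rot_uniq s i j : excess s = -1 ->
  (i < size s)%N -> (j < size s)%N ->
  is_forest_code 1 (rot i s) -> is_forest_code 1 (rot j s) -> i = j.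
Proof.
move=> exc_s + + /(forest_code_rotP _ exc_s) code_i /(forest_code_rotP _ exc_s) code_j.
wlog i_lt_j : i j code_i code_j / (i < j)%N.
  by move=> W i_lt j_lt; case: (ltngtP i j) => // ?; [apply: W | apply/esym/W].
move=> i_lt j_lt; have := code_i (j - i)%N; rewrite excess_take_rot; try lia.
rewrite ifT; last lia; rewrite subnKC; last lia.
move=> /(_ ltac:(lia)) h_ij; have := code_j (size s - j + i)%N.
rewrite excess_take_rot; try lia.
rewrite ifF; last lia; have -> : (size s - j + i - (size s - j))%N = i by lia.
by move=> /(_ ltac:(lia)); rewrite exc_s; lia.
Qed.

Lemma forest_code_rot_exists s : excess s = -1 ->
  exists2 i, (i < size s)%N & is_forest_code 1 (rot i s).
Proof.
move=> exc_s; set n := size s; pose h k := excess (take k s).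
have n_gt0 : (0 < n)%N by move: exc_s; rewrite /excess; lia.
pose is_min i := (i < n)%N && all (fun j => h i <= h j) (iota 0 n).
have ex_min : exists i, is_min i.
  have [i _ min_i] := arg_minP (fun i : 'I_n => h i) (isT : xpredT (Ordinal n_gt0)).
  exists i; rewrite /is_min ltn_ord; apply/allP => j; rewrite mem_iota /= => j_lt.
  exact: (min_i (Ordinal j_lt)).
case: (ex_minnP ex_min) => i /andP[i_lt /allP min_i] first_i.
have {}min_i j : (j < n)%N -> h i <= h j by move=> j_lt; apply: min_i; rewrite mem_iota.
have before_i j : (j < i)%N -> h i < h j.
  move=> j_lt; rewrite ltNge; apply/negP => h_ji.
  suff /first_i : is_min j by lia.
  rewrite /is_min (ltn_trans j_lt i_lt); apply/allP => k; rewrite mem_iota /= => k_lt.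
  exact: le_trans h_ji (min_i k k_lt).
exists i => //; apply/(forest_code_rotP _ exc_s) => k k_lt.
rewrite excess_take_rot; try lia.
case: ifP => k_lt'; first by have := min_i (i + k)%N ltac:(lia); rewrite /h; lia.
by have := before_i (k - (n - i))%N ltac:(lia); rewrite /h /n exc_s; lia.
Qed.

Lemma card_rot_forest_code n s : size s = n -> excess s = -1 ->
  #|[pred i : 'I_n | is_forest_code 1 (rot i s)]| = 1%N.
Proof.
move=> <- exc_s; have [i i_lt code_i] := forest_code_rot_exists exc_s.
apply: (@fintype.eq_card1 _ (Ordinal i_lt)) => j; rewrite !inE.
apply/idP/eqP => [code_j | -> //]; apply/val_inj => /=.
exact: (forest_code_rot_uniq exc_s (ltn_ord j) i_lt code_j code_i).
Qed.

Definition peak_at_head (N : nat) (s : seq nat) : bool :=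
  (head 0%N s == N.+1) && all (leq^~ N) (behead s).

Lemma peak_at_head_rot s N i : (i < size s)%N -> peak_at_head N (rot i s) ->
  i = find (leq N.+1) s.
Proof.
move=> i_lt; rewrite /peak_at_head /rot (drop_nth 0 i_lt) /= all_cat.
move=> /andP[/eqP s_i /andP[_ before_i]].
rewrite -[in find _ s](cat_take_drop i s) find_cat (drop_nth 0 i_lt) /= s_i leqnn.
have /negbTE-> : ~~ has (leq N.+1) (take i s).
  by apply/hasPn => x /(allP before_i); rewrite -ltnNge.
by rewrite size_takel ?addn0 // ltnW.
Qed.

Lemma card_rot_peak_at_head n s N : size s = n ->
  (#|[pred i : 'I_n | peak_at_head N (rot i s)]| <= 1)%N.
Proof.
move=> <-; apply/card_le1_eqP => i j; rewrite !inE => peak_i peak_j.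
apply/val_inj => /=.
by rewrite (peak_at_head_rot (ltn_ord i) peak_i) (peak_at_head_rot (ltn_ord j) peak_j).
Qed.

(** * Weak compositions and rotation-invariant sums *)

Definition weak_compositions (n m : nat) : seq (seq nat) :=
  [seq [seq (k i : nat) | i <- enum 'I_n]
  | k : {ffun 'I_n -> 'I_m.+1}
      <- enum [pred k : {ffun 'I_n -> 'I_m.+1} | \sum_(i < n) (k i : nat) == m]%N].

Lemma sum_massE (R : nzRingType) (p : nat -> R) n m :
  sum_mass p n m = \sum_(s <- weak_compositions n m) \prod_(x <- s) p x.
Proof.
rewrite big_map big_enum /sum_mass; apply: eq_bigr => k _.
by rewrite big_map enumT.
Qed.

Lemma uniq_weak_compositions n m : uniq (weak_compositions n m).
Proof.
rewrite map_inj_uniq ?enum_uniq // => k k' /eq_in_map eq_kk'.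
by apply/ffunP => i; apply/val_inj/eq_kk'; rewrite mem_enum.
Qed.

Lemma mem_weak_compositions n m s :
  (s \in weak_compositions n m) = (size s == n) && (sumn s == m).
Proof.
apply/mapP/andP => [[k] | [/eqP size_s /eqP sum_s]].
  rewrite mem_enum inE => /eqP sum_k ->; rewrite size_map size_enum_ord.
  by rewrite sumnE big_map enumT sum_k.
pose k := [ffun i : 'I_n => inord (nth 0%N s i) : 'I_m.+1].
have nth_le i : (nth 0 s i <= m)%N.
  rewrite -sum_s; elim: s {size_s sum_s k} i => [|x s IH] [|i] //=; first exact: leq_addr.
  exact: leq_trans (IH i) (leq_addl _ _).
have s_k : s = [seq (k i : nat) | i <- enum 'I_n].
  rewrite -[LHS](mkseq_nth 0%N) size_s /mkseq -val_enum_ord -map_comp.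
  by apply: eq_map => i /=; rewrite ffunE inordK ?ltnS.
exists k => //; rewrite mem_enum inE.
by move: sum_s; rewrite s_k sumnE big_map enumT => ->.
Qed.

Lemma big_weak_compositions_rot (R : nzRingType) (G : seq nat -> R) n m i :
  \sum_(s <- weak_compositions n m) G (rot i s) = \sum_(s <- weak_compositions n m) G s.
Proof.
rewrite -(big_map (rot i) xpredT); apply/perm_big/uniq_perm => [||s].
- by rewrite map_inj_uniq ?uniq_weak_compositions //; apply: rot_inj.
- exact: uniq_weak_compositions.
apply/mapP/idP => [[u u_in ->] | s_in].
  by move: u_in; rewrite !mem_weak_compositions size_rot sumn_rot.
exists (rotr i s); rewrite ?rotrK //.
by move: s_in; rewrite !mem_weak_compositions size_rotr /rotr sumn_rot.
Qed.

Section RotationSums.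

Variables (R : nzRingType) (F : seq nat -> R).
Hypothesis F_rot : forall i s, F (rot i s) = F s.

Lemma sum_weak_compositions_rot_card (P : pred (seq nat)) n m :
  n%:R * \sum_(s <- weak_compositions n m | P s) F s =
  \sum_(s <- weak_compositions n m) #|[pred i : 'I_n | P (rot i s)]|%:R * F s.
Proof.
transitivity (\sum_(i < n) \sum_(s <- weak_compositions n m)
                (P (rot i s))%:R * F (rot i s)).
  rewrite mulr_natl -[n in _ *+ n]card_ord -sumr_const big_mkcond /=.
  apply: eq_bigr => i _.
  rewrite (big_weak_compositions_rot (fun s => (P s)%:R * F s)) big_mkcond.
  by apply: eq_bigr => s _; case: (P s); rewrite ?mul1r ?mul0r.
rewrite exchange_big; apply: eq_bigr => s _ /=.
rewrite -sum1_card natr_sum mulr_suml [RHS]big_mkcond; apply: eq_bigr => i _.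
by rewrite F_rot inE; case: (P _); rewrite ?mul1r ?mul0r.
Qed.

Lemma sum_weak_compositions_forest_code n : (0 < n)%N ->
  \sum_(s <- weak_compositions n n.-1) F s =
  n%:R * \sum_(s <- weak_compositions n n.-1 | is_forest_code 1 s) F s.
Proof.
move=> n_gt0; rewrite sum_weak_compositions_rot_card big_seq [RHS]big_seq.
apply: eq_bigr => s; rewrite mem_weak_compositions => /andP[/eqP size_s /eqP sum_s].
by rewrite card_rot_forest_code ?mul1r // /excess size_s sum_s; lia.
Qed.

End RotationSums.

Lemma sum_weak_compositions_peak_at_head_le (R : numDomainType) (F : seq nat -> R) n m N :
  (forall s, 0 <= F s) -> (forall i s, F (rot i s) = F s) ->
  n%:R * \sum_(s <- weak_compositions n m | peak_at_head N s) F s <=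
  \sum_(s <- weak_compositions n m) F s.
Proof.
move=> F_ge0 F_rot; rewrite sum_weak_compositions_rot_card // big_seq [leRHS]big_seq.
apply: ler_sum => s; rewrite mem_weak_compositions => /andP[/eqP size_s _].
by rewrite ler_piMl // lern1 card_rot_peak_at_head.
Qed.

Lemma big_peak_at_head_prod (R : nzRingType) (mu : nat -> R) n m N : (N < m)%N ->
  \sum_(s <- weak_compositions n.+1 m | peak_at_head N s) \prod_(x <- s) mu x =
  mu N.+1 * \sum_(s <- weak_compositions n (m - N.+1) | all (leq^~ N) s)
              \prod_(x <- s) mu x.
Proof.
move=> N_lt_m; rewrite big_distrr /= -big_filter -[RHS]big_filter.
have prod_cons s : mu N.+1 * \prod_(x <- s) mu x = \prod_(x <- N.+1 :: s) mu x.
  by rewrite big_cons.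
under [RHS]eq_bigr do rewrite prod_cons.
rewrite -(big_map (cons N.+1) xpredT (fun s => \prod_(x <- s) mu x)).
apply/perm_big/uniq_perm; rewrite ?filter_uniq ?uniq_weak_compositions //.
  by rewrite map_inj_uniq ?filter_uniq ?uniq_weak_compositions // => s t [].
case=> [|x s]; rewrite mem_filter mem_weak_compositions.
  by apply/esym/mapP => -[].
rewrite /peak_at_head /=; case: (eqVneq x N.+1) => [-> | x_neq] /=; last first.
  by apply/esym/mapP => -[t _ [eq_x _]]; rewrite eq_x eqxx in x_neq.
rewrite mem_map => [|t t' [] //]; rewrite mem_filter mem_weak_compositions.
case: (all _ s) => //=.
by apply/andP/andP => -[/eqP size_s /eqP sum_s]; split; apply/eqP; lia.
Qed.

(** * Galton-Watson masses and truncated walks *)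

Lemma gw_weight_lukasiewicz (R : nzRingType) (mu : nat -> R) t :
  gw_weight mu t = \prod_(x <- lukasiewicz t) mu x.
Proof.
elim/tree_ind_mem: t => ts IH /=; rewrite big_cons; congr (_ * _).
elim: ts IH => [|t ts IHts] IH /=; first by rewrite big_nil.
rewrite big_cat IH ?mem_head //= IHts // => u ut.
by apply: IH; rewrite inE ut orbT.
Qed.

Lemma big_plane_trees_lukasiewicz (R : nzRingType) (F : seq nat -> R) n :
  \sum_(t <- plane_trees n) F (lukasiewicz t) =
  \sum_(s <- weak_compositions n n.-1 | is_forest_code 1 s) F s.
Proof.
rewrite -(big_map lukasiewicz xpredT) -[RHS]big_filter; apply/perm_big/uniq_perm.
- by rewrite map_inj_uniq ?uniq_plane_trees //; apply: lukasiewicz_inj.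
- by rewrite filter_uniq ?uniq_weak_compositions.
move=> s; rewrite mem_filter mem_weak_compositions; apply/mapP/idP.
  move=> [t]; rewrite mem_plane_trees => /eqP size_t ->.
  have code_t : is_forest_code 1 (lukasiewicz t).
    by rewrite -(cats0 (lukasiewicz t)) forest_code_tree_cat.
  have := forest_code_sumn code_t; rewrite size_lukasiewicz size_t code_t => sum_t.
  by rewrite eqxx /=; apply/eqP; lia.
case/and3P => /forest_codeP[[|t [|? ?]] //= _ <-] /eqP size_s _.
exists t; last by rewrite /lukasiewicz_forest /= cats0.
by rewrite mem_plane_trees -size_lukasiewicz -size_s /lukasiewicz_forest /= cats0.
Qed.

Lemma gw_size_mass_forest_code (R : nzRingType) (mu : nat -> R) n :
  gw_size_mass mu n =
  \sum_(s <- weak_compositions n n.-1 | is_forest_code 1 s) \prod_(x <- s) mu x.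
Proof.
rewrite /gw_size_mass -big_plane_trees_lukasiewicz.
by apply: eq_bigr => t _; rewrite gw_weight_lukasiewicz.
Qed.

Definition trunc_weight (R : nzRingType) (mu : nat -> R) N (s : seq nat) : R :=
  if all (leq^~ N) s then \prod_(x <- s) mu x else 0.

Lemma trunc_weight_rot (R : comNzRingType) (mu : nat -> R) N i s :
  trunc_weight mu N (rot i s) = trunc_weight mu N s.
Proof.
have rot_s := permEl (perm_rot i s).
by rewrite /trunc_weight (perm_all _ rot_s) (perm_big _ rot_s).
Qed.

Lemma maxdeg_mass_forest_code (R : nzRingType) (mu : nat -> R) n N :
  \sum_(t <- plane_trees n | (maxdeg t <= N)%N) gw_weight mu t =
  \sum_(s <- weak_compositions n n.-1 | is_forest_code 1 s) trunc_weight mu N s.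
Proof.
rewrite big_mkcond -big_plane_trees_lukasiewicz; apply: eq_bigr => t _.
by rewrite /trunc_weight maxdeg_leq_lukasiewicz gw_weight_lukasiewicz.
Qed.

Section TruncatedWalk.

Variables (R : realType) (mu : nat -> R) (N : nat).
Let q := \sum_(j < N.+1) mu j.

Lemma prod_trunc_law s :
  \prod_(x <- s) trunc_law mu N x = trunc_weight mu N s * q^-1 ^+ size s.
Proof.
elim: s => [|x s IH]; first by rewrite /trunc_weight /= !big_nil expr0 mulr1.
rewrite !big_cons IH /trunc_weight /trunc_law /=.
case: (x <= N)%N; last by rewrite !mul0r.
by case: (all _ s); rewrite ?mul0r ?mulr0 //= big_cons exprS /q; ring.
Qed.

Lemma sum_mass_trunc_law n m :
  sum_mass (trunc_law mu N) n m =
  (\sum_(s <- weak_compositions n m) trunc_weight mu N s) * q^-1 ^+ n.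
Proof.
rewrite sum_massE big_distrl /= big_seq [RHS]big_seq; apply: eq_bigr => s.
by rewrite mem_weak_compositions prod_trunc_law => /andP[/eqP-> _].
Qed.

Lemma walk_prob_trunc_law_excursion n : (0 < n)%N ->
  walk_prob (trunc_law mu N) n (-1) =
  n%:R * (\sum_(s <- weak_compositions n n.-1 | is_forest_code 1 s) trunc_weight mu N s)
  * q^-1 ^+ n.
Proof.
move=> n_gt0; rewrite /walk_prob; have -> : n%:Z + -1 = n.-1 by lia.
by rewrite le0z_nat sum_mass_trunc_law sum_weak_compositions_forest_code //;
  apply: trunc_weight_rot.
Qed.

Lemma walk_prob_trunc_law_bridge m : (N < m)%N ->
  walk_prob (trunc_law mu N) m (- N.+1%:Z) =
  (\sum_(s <- weak_compositions m (m - N.+1) | all (leq^~ N) s) \prod_(x <- s) mu x)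
  * q^-1 ^+ m.
Proof.
move=> N_lt_m; rewrite /walk_prob; have -> : m%:Z - N.+1%:Z = (m - N.+1)%N by lia.
rewrite le0z_nat sum_mass_trunc_law [in RHS]big_mkcond.
by congr (_ * _); apply: eq_bigr => s _; rewrite /trunc_weight.
Qed.

End TruncatedWalk.

Lemma peak_mass_le_gw_size_mass (R : numDomainType) (mu : nat -> R) n N :
  (forall k, 0 <= mu k) -> (N.+1 < n)%N ->
  mu N.+1 * \sum_(s <- weak_compositions n.-1 (n.-1 - N.+1) | all (leq^~ N) s)
              \prod_(x <- s) mu x
  <= gw_size_mass mu n.
Proof.
move=> mu_ge0 N_lt_n; have n_gt0 : (0 < n)%N by lia.
have prod_ge0 s : 0 <= \prod_(x <- s) mu x by apply: prodr_ge0.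
have prod_rot i s : \prod_(x <- rot i s) mu x = \prod_(x <- s) mu x.
  by rewrite (perm_big _ (permEl (perm_rot i s))).
rewrite -(ler_pM2l (ltr0Sn _ n.-1)) prednK // -big_peak_at_head_prod; last lia.
rewrite prednK // gw_size_mass_forest_code -sum_weak_compositions_forest_code //.
exact: sum_weak_compositions_peak_at_head_le.
Qed.

Lemma offspring_distribution_sum_le1 (R : realType) (mu : nat -> R) n :
  offspring_distribution mu -> \sum_(j < n) mu j <= 1.
Proof.
move=> [mu_ge0 mu_cvg]; set u := (fun n => \sum_(k < n) mu k) : nat -> R.
have u_nd : nondecreasing_seq u.
  by apply/nondecreasing_seqP => k; rewrite /u big_ord_recr lerDl.
have u_cvg : cvgn u by apply: cvgP mu_cvg.
by have := nondecreasing_cvgn_le u_nd u_cvg n; rewrite (cvg_lim _ mu_cvg).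
Qed.

Lemma ler_ratio_rescale (R : realFieldType) (x y a b k q : R) m : (0 < m)%N ->
  0 <= x -> 0 < k -> 0 < q <= 1 -> 0 < k * a * (b * q^-1 ^+ m.-1) -> a * b <= y ->
  x / y <= k * x * q^-1 ^+ m / (k * a * (b * q^-1 ^+ m.-1)).
Proof.
move=> m_gt0 x_ge0 k_gt0 /andP[q_gt0 q_le1] den_gt0 ab_le_y.
have Q_gt0 : 0 < q^-1 ^+ m.-1 by rewrite exprn_gt0 ?invr_gt0.
have ab_gt0 : 0 < a * b.
  have den_eq : k * a * (b * q^-1 ^+ m.-1) = k * (a * b) * q^-1 ^+ m.-1 by ring.
  by rewrite den_eq pmulr_lgt0 // pmulr_rgt0 in den_gt0.
have -> : k * x * q^-1 ^+ m / (k * a * (b * q^-1 ^+ m.-1)) = x / (q * (a * b)).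
  rewrite -(prednK m_gt0) exprS /=; field.
  have := lt0r_neq0 ab_gt0; rewrite mulf_eq0 negb_or => /andP[-> ->].
  by rewrite !lt0r_neq0.
apply: (@le_trans _ _ (x / (a * b))).
  by rewrite ler_wpM2l // lef_pV2 ?posrE // (lt_le_trans ab_gt0 ab_le_y).
by rewrite ler_wpM2l // lef_pV2 ?posrE ?(mulr_gt0 q_gt0 ab_gt0) // ger_pMl.
Qed.

Theorem mainTheorem16 (R : realType) (mu : nat -> R) (N n : nat) :
  offspring_distribution mu ->
  0 < \sum_(j < N.+1) mu j ->
  (N.+1 < n)%N ->
  0 < gw_size_mass mu n ->
  0 < n%:R * mu N.+1 * walk_prob (trunc_law mu N) n.-1 (- (N.+1)%:Z) ->
  prob_maxdeg_le mu n N <=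
    walk_prob (trunc_law mu N) n (-1)
    / (n%:R * mu N.+1 * walk_prob (trunc_law mu N) n.-1 (- (N.+1)%:Z)).
Proof.
move=> mu_od q_gt0 N_lt_n _ den_gt0; have n_gt0 : (0 < n)%N by lia.
have mu_ge0 := mu_od.1.
rewrite /prob_maxdeg_le maxdeg_mass_forest_code walk_prob_trunc_law_excursion //.
rewrite walk_prob_trunc_law_bridge in den_gt0 *; last lia.
apply: ler_ratio_rescale => //.
- apply: sumr_ge0 => s _; rewrite /trunc_weight.
  by case: ifP => // _; apply: prodr_ge0.
- by rewrite ltr0n.
- by rewrite q_gt0 offspring_distribution_sum_le1.
- exact: peak_mass_le_gw_size_mass.
Qed.
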